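(* $\mathrm{SLT}_1\subsetneq\mathrm{REG}_5^Z$.
   Context: Strictly locally testable languages: let $V$ be an alphabet and $k\ge1$. For $B,I,E\subseteq V^k$ and $F\subseteq V^{\le k-1}$, $\mathrm{slt}(B,I,E,F)$ is the language over $V$ consisting of all words in $F$ together with all words $a_1\cdots a_n$ ($a_i\in V$, $n\ge k$) with $a_1\cdots a_k\in B$, $a_{j+1}\cdots a_{j+k}\in I$ for all $1\le j\le n-k-1$, and $a_{n-k+1}\cdots a_n\in E$. $\mathrm{SLT}_k$ is the family of languages of this form (strictly locally $k$-testable languages). For a regular language $L\subseteq V^*$, $\mathrm{State}(L)$ is the minimum number of states of a deterministic finite automaton $(V,Z,z_0,F,\delta)$ with total transition function $\delta:Z\times V\to Z$ accepting $L$; $\mathrm{REG}_n^Z=\{L\text{ regular}:\mathrm{State}(L)\le n\}$. *)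

From mathcomp Require Import all_boot.
Set Implicit Arguments. Unset Strict Implicit. Unset Printing Implicit Defensive.

Definition language (V : finType) := seq V -> Prop.

(* slt(B,I,E,F): words in F, plus words a_1..a_n (n >= k) whose first k-factor
   is in B, whose k-factors a_{j+1}..a_{j+k} (1 <= j <= n-k-1) are in I, and
   whose last k-factor is in E.  take k (drop j w) = a_{j+1}..a_{j+k}. *)
Definition slt (V : finType) (k : nat) (B I E F : seq V -> Prop) : language V :=
  fun w => F w \/
    (k <= size w /\ B (take k w) /\
     (forall j, 1 <= j -> j <= size w - k - 1 -> I (take k (drop j w))) /\
     E (drop (size w - k) w)).

Definition SLT (k : nat) (V : finType) (L : language V) : Prop :=
  exists (B I E F : seq V -> Prop),
    (forall w, B w -> size w = k) /\ (forall w, I w -> size w = k) /\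
    (forall w, E w -> size w = k) /\ (forall w, F w -> size w <= k - 1) /\
    (forall w, L w <-> slt k B I E F w).

Definition dfa_accepts (V Z : finType) (z0 : Z) (Fin : pred Z)
  (delta : Z -> V -> Z) (w : seq V) : bool := Fin (foldl delta z0 w).

(* REG_n^Z: regular languages with State(L) <= n, i.e. accepted by some complete
   DFA with at most n states. *)
Definition REGZ (n : nat) (V : finType) (L : language V) : Prop :=
  exists (Z : finType) (z0 : Z) (Fin : pred Z) (delta : Z -> V -> Z),
    #|Z| <= n /\ (forall w, L w <-> dfa_accepts z0 Fin delta w).

From mathcomp Require Import all_boot zify.
From mathcomp Require Import boolp.

Set Implicit Arguments.
Unset Strict Implicit.
Unset Printing Implicit Defensive.

(* For k = 1 a strictly locally testable language constrains a word only
   through its first letter (in B), its last letter (in E) and its interior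
   letters (in I); the empty word is decided by F, which contains no other
   word.
   Inclusion: a complete DFA with the five states option (bool * bool)
   recognises slt(B,I,E,F).  The start state None has read nothing; after a
   nonempty word a :: u the state is Some (p, q), where p says that the word
   is a "good prefix" (a in B, all later letters in I) and q says that the
   word is in the language (slt1_state_cons).
   Strictness: the even-length words over a nonempty alphabet form a
   language with a two-state DFA, but an SLT_1 language containing aa and
   aaaa must also contain aaa, so this language is not in SLT_1. *)

Lemma take1_drop (T : Type) (x0 : T) (s : seq T) i :
  i < size s -> take 1 (drop i s) = [:: nth x0 s i].
Proof. by move=> lt_i_s; rewrite (drop_nth x0 lt_i_s) /= take0. Qed.

Section SLT1Words.
Variables (V : finType) (B I E F : seq V -> Prop).

Lemma slt1_single a :
  slt 1 B I E F [:: a] <-> F [:: a] \/ (B [:: a] /\ E [:: a]).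
Proof.
rewrite /slt /=; split=> [[hF | [_ [hB [_ hE]]]] | [hF | [hB hE]]]; try tauto.
by right; split=> //; split=> //; split=> // j; lia.
Qed.

Lemma slt1_rcons a (v : seq V) c :
  slt 1 B I E F (a :: rcons v c) <->
  F (a :: rcons v c) \/
  (B [:: a] /\ (forall x, x \in v -> I [:: x]) /\ E [:: c]).
Proof.
have size_w : size (a :: rcons v c) - 1 - 1 = size v.
  by rewrite /= size_rcons; lia.
have last_w : drop (size (a :: rcons v c) - 1) (a :: rcons v c) = [:: c].
  by rewrite /= size_rcons subn1 /= drop_rcons // drop_size.
have interior j : 1 <= j -> j <= size v ->
    take 1 (drop j (a :: rcons v c)) = [:: nth a v j.-1].
  move=> j_gt0 j_le; case: j j_gt0 j_le => // j _ j_lt /=.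
  rewrite (take1_drop a) ?size_rcons /=; last lia.
  by rewrite nth_rcons j_lt.
have interiorE : (forall j, 1 <= j -> j <= size v -> I [:: nth a v j.-1]) <->
                 (forall x, x \in v -> I [:: x]).
  split=> [hI x /(nthP a) [i lt_i <-] | hI j j_gt0 j_le].
    by have := hI i.+1 isT lt_i.
  by apply/hI/mem_nth; rewrite prednK.
rewrite /slt size_w last_w /= take0 -interiorE.
split=> [[hF | [_ [hB [hI hE]]]] | [hF | [hB [hI hE]]]]; try by left.
- right; split=> //; split=> // j j_gt0 j_le.
  by rewrite -interior //; apply: hI.
- right; split=> //; split=> //; split=> // j j_gt0 j_le.
  by rewrite interior //; apply: hI.
Qed.

End SLT1Words.

Section SLT1Automaton.
Variables (V : finType) (B I E F : seq V -> Prop).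
Hypothesis F_short : forall w, F w -> size w <= 1 - 1.

Lemma not_F_cons a (u : seq V) : ~ F (a :: u).
Proof. by move/F_short. Qed.

Definition good_prefix (a : V) (u : seq V) : Prop :=
  B [:: a] /\ (forall x, x \in u -> I [:: x]).

(* State None: nothing read yet.  State Some (p, q): the nonempty word read so
   far is a good prefix (p) and belongs to the language (q). *)
Definition slt1_delta (z : option (bool * bool)) (c : V) :
  option (bool * bool) :=
  match z with
  | None => Some (`[< B [:: c] >], `[< B [:: c] /\ E [:: c] >])
  | Some (p, _) => Some (p && `[< I [:: c] >], p && `[< E [:: c] >])
  end.

Definition slt1_final (z : option (bool * bool)) : bool :=
  if z is Some (_, q) then q else `[< F [::] >].

Lemma slt1_state_cons a (u : seq V) :
  foldl slt1_delta None (a :: u) =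
  Some (`[< good_prefix a u >], `[< slt 1 B I E F (a :: u) >]).
Proof.
elim/last_ind: u => [|v c IH].
  rewrite /= /good_prefix; congr (Some (_, _)); apply: asbool_equiv_eq.
    by split=> [hB | []//]; split.
  by rewrite slt1_single; have := @not_F_cons a [::]; tauto.
rewrite -rcons_cons foldl_rcons IH /= -!asbool_and /good_prefix.
congr (Some (_, _)); apply: asbool_equiv_eq.
  split=> [[[hB hI] hc] | [hB hI]].
    by split=> // x; rewrite mem_rcons inE => /orP [/eqP -> | /hI].
  split; first split=> // x xv; apply: hI; rewrite mem_rcons inE ?eqxx //.
  by rewrite xv orbT.
by rewrite slt1_rcons; have := @not_F_cons a (rcons v c); tauto.
Qed.

Lemma slt1_dfa_accepts w :
  slt 1 B I E F w <-> dfa_accepts None slt1_final slt1_delta w.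
Proof.
rewrite /dfa_accepts; case: w => [|a u].
  split=> [[hF | [//]] | /asboolP hF]; [exact/asboolP | by left].
by rewrite slt1_state_cons /=; split=> /asboolP.
Qed.

End SLT1Automaton.

Lemma SLT1_sub_REGZ5 (V : finType) (L : language V) : SLT 1 L -> REGZ 5 L.
Proof.
move=> [B [I [E [F [_ [_ [_ [F_short L_slt]]]]]]]].
exists (option (bool * bool)), None, (slt1_final F), (slt1_delta B I E).
split; first by rewrite card_option card_prod card_bool.
by move=> w; rewrite L_slt; apply: slt1_dfa_accepts.
Qed.

Lemma REGZ_mono (V : finType) (L : language V) m n :
  m <= n -> REGZ m L -> REGZ n L.
Proof.
move=> le_mn [Z [z0 [Fin [delta [card_Z L_dfa]]]]].
by exists Z, z0, Fin, delta; split=> //; apply: leq_trans le_mn.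
Qed.

Definition even_length (V : finType) : language V := fun w => ~~ odd (size w).
Arguments even_length : clear implicits.

Lemma parity_foldl (V : finType) (w : seq V) (z : bool) :
  foldl (fun z _ => ~~ z) z w = z (+) odd (size w).
Proof. by elim: w z => [|x w IH] z /=; rewrite ?addbF // IH addbN negb_add. Qed.

Lemma even_length_REGZ2 (V : finType) : REGZ 2 (even_length V).
Proof.
exists bool, true, idfun, (fun z _ => ~~ z); split; first by rewrite card_bool.
by move=> w; rewrite /dfa_accepts parity_foldl.
Qed.

(* Over a nonempty alphabet: aa and aaaa have even length, so a is a valid
   first, interior and last letter; then the odd word aaa is accepted too. *)
Lemma even_length_not_SLT1 (V : finType) (a : V) : ~ SLT 1 (even_length V).
Proof.
move=> [B [I [E [F [_ [_ [_ [F_short L_slt]]]]]]]].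
have in_L v : even_length V (a :: rcons v a) <->
              B [:: a] /\ (forall x, x \in v -> I [:: x]) /\ E [:: a].
  rewrite L_slt slt1_rcons.
  by have := not_F_cons F_short (a := a) (u := rcons v a); tauto.
have [hB [_ hE]] := proj1 (in_L [::]) isT.
have [_ [hI _]] := proj1 (in_L [:: a; a]) isT.
suff : even_length V [:: a; a; a] by [].
apply/(in_L [:: a]); split=> //; split=> // x; rewrite inE => /eqP ->.
by apply: hI; rewrite inE eqxx.
Qed.

Theorem mainTheorem7 :
  (forall (V : finType) (L : language V), SLT 1 L -> REGZ 5 L) /\
  (exists (V : finType) (L : language V), REGZ 5 L /\ ~ SLT 1 L).
Proof.
split; first exact: SLT1_sub_REGZ5.
exists bool, (even_length bool); split; last exact: (even_length_not_SLT1 true).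
exact: REGZ_mono (even_length_REGZ2 bool).
Qed.
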